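(* Let $k\ge1$ and $\mathcal{H}\subset\mathbb{Z}^k\setminus\{\mathbf{0}\}$. Then $\gamma(\mathcal{H})\le\delta(\mathcal{H})$.
   Context: $\lVert x\rVert$ denotes the distance from $x\in\mathbb{R}$ to the nearest integer and $\cdot$ the standard inner product. Let $\mathcal{T}(\mathcal{H})$ be the set of real trigonometric polynomials $T(\mathbf{x})=a_0+\sum_{\mathbf{h}\in\mathcal{H}}a_{\mathbf{h}}\cos(2\pi\mathbf{h}\cdot\mathbf{x})$ (finitely many nonzero real $a_{\mathbf{h}}$) with $T(\mathbf{x})\ge0$ for all $\mathbf{x}\in\mathbb{R}^k$ and $T(\mathbf{0})=1$. Define $\delta(\mathcal{H})=\inf_{T\in\mathcal{T}(\mathcal{H})}a_0$ and $\gamma(\mathcal{H})=\sup_{\xi\in\mathbb{R}^k}\inf_{\mathbf{h}\in\mathcal{H}}\lVert\mathbf{h}\cdot\xi\rVert$. *)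

From HB Require Import structures.
From mathcomp Require Import all_boot all_order all_algebra.
From mathcomp Require Import all_classical all_reals all_analysis.
Set Implicit Arguments. Unset Strict Implicit. Unset Printing Implicit Defensive.
Import Order.TTheory GRing.Theory Num.Theory.
Local Open Scope classical_set_scope.
Local Open Scope ring_scope.

Definition zvec (k : nat) := 'I_k -> int.
Definition rvec (R : realType) (k : nat) := 'I_k -> R.

Definition dotZR {R : realType} {k : nat} (h : zvec k) (x : rvec R k) : R :=
  \sum_(i < k) (h i)%:~R * x i.

Definition dist_int {R : realType} (x : R) : R :=
  inf [set `|x - n%:~R| | n in [set: int]].

(* value at x of T(x) = a0 + sum_{h in s} a_h cos(2 pi h.x),
   s a duplicate-free finite list of frequencies carrying the
   (possibly) nonzero coefficients *)
Definition trig_eval {R : realType} {k : nat} (a0 : R) (s : seq (zvec k))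
  (a : zvec k -> R) (x : rvec R k) : R :=
  a0 + \sum_(h <- s) a h * cos (2 * pi * dotZR h x).

Definition in_TH {R : realType} {k : nat} (H : set (zvec k)) (a0 : R)
  (s : seq (zvec k)) (a : zvec k -> R) : Prop :=
  uniq s /\ (forall h, h \in s -> H h) /\
  (forall x : rvec R k, 0 <= trig_eval a0 s a x) /\
  trig_eval a0 s a (fun _ => 0) = 1.

Definition delta {R : realType} {k : nat} (H : set (zvec k)) : \bar R :=
  ereal_inf [set a0%:E | a0 in [set a0 : R | exists s a, in_TH H a0 s a]].

Definition gamma {R : realType} {k : nat} (H : set (zvec k)) : \bar R :=
  ereal_sup [set ereal_inf [set (dist_int (dotZR h xi))%:E | h in H]
            | xi in [set: rvec R k]].

From HB Require Import structures.
From mathcomp Require Import all_boot all_order all_algebra.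
From mathcomp Require Import all_classical all_reals all_analysis.
From mathcomp Require Import ring lra zify.
Set Implicit Arguments.
Unset Strict Implicit.
Unset Printing Implicit Defensive.
Import Order.TTheory GRing.Theory Num.Theory.
Local Open Scope classical_set_scope.
Local Open Scope ring_scope.

(* When xi = p/q is rational, weight the values of T at the points n p / q,
   n < q, by the Fejer kernel F(n) = |sum_(i < L) e(i n / q)|^2 with
   L = floor(a0 q) + 1.  Orthogonality of the characters of Z/qZ makes the
   weighted sum equal to a0 L q, plus the contributions of the frequencies h
   with ||h . p/q|| < L/q; the term n = 0 alone is at least F(0) T(0) = L^2.
   If every h had ||h . p/q|| > a0, hence >= L/q, we would get L <= a0 q.
   A general xi is approximated by rationals, ||.|| being 1-Lipschitz; and
   a0 >= 0 follows from the same argument with L = 1, for a p making every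
   h . p nonzero and q larger than every |h . p|. *)

Lemma periodicz {U V : zmodType} {f : U -> V} {T : U} :
  periodic f T -> forall (z : int) a, f (a + T *~ z) = f a.
Proof.
move=> fT [] n a; first exact: periodicn.
by rewrite NegzE mulrNz -(periodicn fT n.+1) subrK.
Qed.

Lemma exists_nat_Nroot (D : numDomainType) (P : {poly D}) : P != 0 ->
  exists N : nat, ~~ root P N%:R.
Proof.
move=> P0; pose rs := [seq n%:R : D | n <- iota 0 (size P)].
have rs_uniq : uniq rs.
  by rewrite map_inj_uniq ?iota_uniq // => m n /eqP; rewrite eqr_nat => /eqP.
have /allPn[_ /mapP[N _ ->] NrootP] : ~~ all (root P) rs.
  apply/negP => /(max_poly_roots P0)/(_ rs_uniq).
  by rewrite size_map size_iota ltnn.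
by exists N.
Qed.

Lemma gap_Ndvdz (q L : nat) (r d : int) :
  (forall j : int, L%:Z <= `|r - j * q%:Z|) -> `|d| < L%:Z ->
  ~~ (q%:Z %| d + r)%Z && ~~ (q%:Z %| d - r)%Z.
Proof.
move=> gap dL; apply/andP; split; apply/dvdzP => -[J dJ].
- by have := gap J; lia.
- by have := gap (- J); lia.
Qed.

Lemma gap_lt_modulus (q L : nat) (r : int) : (0 < q)%N ->
  (forall j : int, L%:Z <= `|r - j * q%:Z|) -> (L < q)%N.
Proof.
move=> q0 /(_ (r %/ q)%Z); have := divz_eq r q.
have : (0 <= r %% q)%Z by rewrite modz_ge0 // eqz_nat -lt0n.
have : (r %% q < q)%Z by rewrite ltz_pmod // ltz_nat.
lia.
Qed.

Section GammaDelta.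
Variable R : realType.

Lemma dist_int_le (x : R) (j : int) : dist_int x <= `|x - j%:~R|.
Proof. by apply: ge_inf; [exists 0 => _ [n _ <-] | exists j]. Qed.

Lemma dist_int_le1 (x : R) : dist_int x <= 1.
Proof.
apply: le_trans (dist_int_le x (Num.floor x)) _.
have := floor_itv x; rewrite rmorphD /= => /andP[fl_le lt_fl1].
by rewrite ger0_norm ?subr_ge0 //; lra.
Qed.

Lemma dist_int_lipschitz (x y : R) : dist_int x <= dist_int y + `|x - y|.
Proof.
rewrite -lerBlDr; apply: lb_le_inf; first by exists `|y - 0%:~R|, 0.
move=> _ [n _ <-]; rewrite lerBlDr; apply: le_trans (dist_int_le x n) _.
have -> : x - n%:~R = (y - n%:~R) + (x - y) by ring.
exact: ler_normD.
Qed.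

Lemma dist_int_frac_le (m j : int) (q : nat) (c : R) : (0 < q)%N ->
  `|m - j * q%:Z|%:~R <= c * q%:R -> dist_int (q%:R^-1 * m%:~R) <= c.
Proof.
move=> q0 le_c; have qR : 0 < q%:R :> R by rewrite ltr0n.
apply: le_trans (dist_int_le _ j) _.
have -> : q%:R^-1 * m%:~R - j%:~R = (m - j * q%:Z)%:~R / q%:R :> R.
  by rewrite rmorphB rmorphM /=; field; rewrite gt_eqF.
by rewrite normrM [`|_^-1|]gtr0_norm ?invr_gt0 // ler_pdivrMr // -intr_norm.
Qed.

Lemma floor_approx (N : nat) (x : R) : (0 < N)%N ->
  `|x - N%:R^-1 * (Num.floor (N%:R * x))%:~R| <= N%:R^-1.
Proof.
move=> N0; have NR : 0 < N%:R :> R by rewrite ltr0n.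
have := floor_itv (N%:R * x); rewrite rmorphD /= => /andP[fl_le lt_fl1].
have -> : x - N%:R^-1 * (Num.floor (N%:R * x))%:~R =
    (N%:R * x - (Num.floor (N%:R * x))%:~R) / N%:R by field; rewrite gt_eqF.
rewrite normrM ger0_norm ?subr_ge0 // gtr0_norm ?invr_gt0 //.
by rewrite ler_piMl ?invr_ge0 ?ltW //; lra.
Qed.

Lemma cosD2piz (z : int) (x : R) : cos (x + 2 * pi * z%:~R) = cos x.
Proof. by rewrite mulrzr mulr_natl (periodicz (@cosD2pi R)). Qed.

Lemma sinD2piz (z : int) (x : R) : sin (x + 2 * pi * z%:~R) = sin x.
Proof. by rewrite mulrzr mulr_natl (periodicz (@sinD2pi R)). Qed.

Lemma sum_cos_telescope (th : R) (q : nat) :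
  2 * sin (th / 2) * \sum_(n < q) cos (th * n%:R) =
  sin (th * q%:R - th / 2) + sin (th / 2).
Proof.
rewrite mulr_sumr.
have -> : \sum_(n < q) 2 * sin (th / 2) * cos (th * n%:R) =
    \sum_(0 <= n < q) (sin (th * n.+1%:R - th / 2) - sin (th * n%:R - th / 2)).
  rewrite big_mkord; apply: eq_bigr => n _.
  have -> : th * n.+1%:R - th / 2 = th * n%:R + th / 2 by rewrite -natr1; field.
  by rewrite sinD sinB; ring.
by rewrite telescope_sumr // mulr0 add0r sinN opprK.
Qed.

Definition cos_frac (q : nat) (r : int) (n : nat) : R :=
  cos (2 * pi * r%:~R / q%:R * n%:R).

Lemma cos_frac0 q n : cos_frac q 0 n = 1.
Proof. by rewrite /cos_frac mulr0 !mul0r cos0. Qed.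

Lemma cos_frac_at0 q r : cos_frac q r 0 = 1.
Proof. by rewrite /cos_frac mulr0 cos0. Qed.

Lemma cos_frac_mul q r r' n :
  cos_frac q r n * cos_frac q r' n = (cos_frac q (r + r') n + cos_frac q (r - r') n) / 2.
Proof.
rewrite /cos_frac rmorphD rmorphB /=.
set x := 2 * pi * r%:~R / q%:R * n%:R; set y := 2 * pi * r'%:~R / q%:R * n%:R.
have -> : 2 * pi * (r%:~R + r'%:~R) / q%:R * n%:R = x + y by rewrite /x /y; ring.
have -> : 2 * pi * (r%:~R - r'%:~R) / q%:R * n%:R = x - y by rewrite /x /y; ring.
by rewrite cosD cosB; field.
Qed.

Lemma cos_frac_modz (q : nat) (r : int) n : (0 < q)%N ->
  cos_frac q (r %% q)%Z n = cos_frac q r n.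
Proof.
move=> q0; rewrite /cos_frac {2}(divz_eq r q) -(cosD2piz ((r %/ q)%Z * n)).
congr cos; rewrite !rmorphD !rmorphM /=.
by field; rewrite pnatr_eq0 -lt0n.
Qed.

Lemma sum_cos_frac_nat (q t : nat) : (0 < t < q)%N ->
  \sum_(n < q) cos_frac q t n = 0.
Proof.
case/andP=> t0 tq; have q0 : (0 < q)%N by rewrite (ltn_trans t0).
pose th : R := 2 * pi * t%:R / q%:R.
have -> : \sum_(n < q) cos_frac q t n = \sum_(n < q) cos (th * n%:R) by [].
have sin_half_gt0 : 0 < sin (th / 2).
  have -> : th / 2 = pi * (t%:R / q%:R) by rewrite /th; field; rewrite pnatr_eq0 -lt0n.
  apply: sin_gt0_pi; rewrite mulr_gt0 ?pi_gt0 ?divr_gt0 ?ltr0n //=.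
  by rewrite -[ltRHS]mulr1 ltr_pM2l ?pi_gt0 // ltr_pdivrMr ?ltr0n // mul1r ltr_nat.
have := sum_cos_telescope th q.
have -> : th * q%:R - th / 2 = - (th / 2) + 2 * pi * (t%:Z)%:~R.
  by rewrite /th; field; rewrite pnatr_eq0 -lt0n.
rewrite sinD2piz sinN addNr => /eqP.
by rewrite !mulf_eq0 pnatr_eq0 (gt_eqF sin_half_gt0) /= => /eqP.
Qed.

Lemma sum_cos_frac_eq0 (q : nat) (r : int) : (0 < q)%N -> ~~ (q%:Z %| r)%Z ->
  \sum_(n < q) cos_frac q r n = 0.
Proof.
move=> q0 qNr; under eq_bigr do rewrite -cos_frac_modz //.
have : (0 <= r %% q)%Z by rewrite modz_ge0 // eqz_nat -lt0n.
have : (r %% q < q)%Z by rewrite ltz_pmod // ltz_nat.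
case E: (r %% q)%Z => [t|//] tq _; apply: sum_cos_frac_nat.
rewrite -[(t < q)%N]ltz_nat tq andbT lt0n; apply: contra qNr => /eqP t0.
by apply/dvdz_mod0P; rewrite E t0.
Qed.

Section Fejer.
Variables q L : nat.

Definition fejer (n : nat) : R :=
  (\sum_(i < L) cos (2 * pi * i%:R / q%:R * n%:R)) ^+ 2 +
  (\sum_(i < L) sin (2 * pi * i%:R / q%:R * n%:R)) ^+ 2.

Lemma fejer_ge0 n : 0 <= fejer n.
Proof. by rewrite addr_ge0 ?sqr_ge0. Qed.

Lemma fejer0 : fejer 0 = L%:R ^+ 2.
Proof.
rewrite /fejer; under eq_bigr do rewrite mulr0 cos0.
under [X in _ + X ^+ 2]eq_bigr do rewrite mulr0 sin0.
by rewrite big1_eq expr0n addr0 sumr_const card_ord.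
Qed.

Lemma fejerE n : fejer n = \sum_(i < L) \sum_(j < L) cos_frac q (i%:Z - j%:Z) n.
Proof.
rewrite /fejer !expr2 !big_distrlr -big_split /=; apply: eq_bigr => i _.
rewrite -big_split /=; apply: eq_bigr => j _.
by rewrite /cos_frac -cosB rmorphB /=; congr cos; ring.
Qed.

Lemma sum_fejer : (0 < q)%N -> (L <= q)%N -> \sum_(n < q) fejer n = L%:R * q%:R.
Proof.
move=> q0 Lq; under eq_bigr do rewrite fejerE.
rewrite exchange_big; under eq_bigr do rewrite exchange_big.
rewrite -[in RHS](card_ord L) -sum1_card natr_sum mulr_suml; apply: eq_bigr => i _.
rewrite (bigD1 i) //= [X in _ + X]big1 => [|j ji].
  rewrite addr0 subrr; under eq_bigr do rewrite cos_frac0.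
  by rewrite sumr_const card_ord mul1r.
apply: sum_cos_frac_eq0 => //.
rewrite dvdzE gtnNdvd ?absz_gt0 ?subr_eq0 ?eqz_nat 1?eq_sym //.
by have := ltn_ord i; have := ltn_ord j; lia.
Qed.

Lemma sum_fejer_cos (r : int) : (0 < q)%N ->
  (forall j : int, L%:Z <= `|r - j * q%:Z|) ->
  \sum_(n < q) fejer n * cos_frac q r n = 0.
Proof.
move=> q0 gap; under eq_bigr do rewrite fejerE mulr_suml.
rewrite exchange_big big1 // => i _; under eq_bigr do rewrite mulr_suml.
rewrite exchange_big big1 // => j _.
under eq_bigr do rewrite cos_frac_mul.
have /andP[ND NB] : ~~ (q%:Z %| i%:Z - j%:Z + r)%Z && ~~ (q%:Z %| i%:Z - j%:Z - r)%Z.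
  by apply: gap_Ndvdz gap _; have := ltn_ord i; have := ltn_ord j; lia.
by rewrite -mulr_suml big_split /= !sum_cos_frac_eq0 // addr0 mul0r.
Qed.

End Fejer.

Lemma const_term_ge_gap (X : eqType) (s : seq X) (a : X -> R) (m : X -> int)
    (a0 : R) (q L : nat) :
  (0 < L)%N -> (L <= q)%N ->
  (forall h, h \in s -> forall j : int, L%:Z <= `|m h - j * q%:Z|) ->
  (forall n, 0 <= a0 + \sum_(h <- s) a h * cos_frac q (m h) n) ->
  a0 + \sum_(h <- s) a h = 1 ->
  L%:R / q%:R <= a0.
Proof.
move=> L0 Lq gap T_ge0 T0.
have q0 : (0 < q)%N := leq_trans L0 Lq.
pose T n := a0 + \sum_(h <- s) a h * cos_frac q (m h) n.
pose S := \sum_(n < q) fejer q L n * T n.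
have S_eq : S = a0 * (L%:R * q%:R).
  rewrite /S /T -sum_fejer // mulr_sumr; under eq_bigr do rewrite mulrDr mulr_sumr.
  rewrite big_split /= [X in _ + X]exchange_big /= [X in _ + X]big_seq.
  rewrite [X in _ + X]big1 ?addr0 => [|h hs].
    by apply: eq_bigr => n _; rewrite mulrC.
  under eq_bigr do rewrite mulrCA.
  by rewrite -mulr_sumr sum_fejer_cos ?mulr0 //; exact: gap.
have S_ge : L%:R ^+ 2 <= S.
  rewrite /S (bigD1 (Ordinal q0)) //= fejer0.
  have -> : T 0 = 1 by rewrite -T0 /T; under eq_bigr do rewrite cos_frac_at0 mulr1.
  by rewrite mulr1 lerDl sumr_ge0 // => n _; rewrite mulr_ge0 ?fejer_ge0 ?T_ge0.
have : L%:R ^+ 2 <= a0 * (L%:R * q%:R) by rewrite -S_eq.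
by rewrite ler_pdivrMr ?ltr0n // expr2 mulrCA ler_pM2l ?ltr0n.
Qed.

Section Lattice.
Variable k : nat.

Definition dotZ (h p : zvec k) : int := \sum_(i < k) h i * p i.

Lemma dotZR_scale (h p : zvec k) (c : R) :
  dotZR h (fun i => c * (p i)%:~R) = c * (dotZ h p)%:~R.
Proof.
rewrite /dotZR rmorph_sum mulr_sumr; apply: eq_bigr => i _.
by rewrite rmorphM /=; ring.
Qed.

Lemma dotZR0 (h : zvec k) : dotZR h (fun _ => 0 : R) = 0.
Proof. by rewrite /dotZR big1 // => i _; rewrite mulr0. Qed.

Lemma dotZRB (h : zvec k) (x y : rvec R k) :
  dotZR h x - dotZR h y = dotZR h (fun i => x i - y i).
Proof. by rewrite /dotZR -sumrB; apply: eq_bigr => i _; rewrite mulrBr. Qed.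

Lemma norm_dotZR_le (h : zvec k) (x : rvec R k) (c : R) :
  (forall i, `|x i| <= c) -> `|dotZR h x| <= (\sum_(i < k) `|(h i)%:~R : R|) * c.
Proof.
move=> xc; rewrite mulr_suml; apply: le_trans (ler_norm_sum _ _ _) _.
by apply: ler_sum => i _; rewrite normrM ler_wpM2l.
Qed.

Lemma exists_dotZ_neq0 (s : seq (zvec k)) :
  (forall h, h \in s -> h <> (fun _ => 0)) ->
  exists p : zvec k, forall h, h \in s -> dotZ h p != 0.
Proof.
move=> s_neq0; pose ph (h : zvec k) : {poly int} := \sum_(i < k) h i *: 'X^i.
have phE h (N : nat) : (ph h).[N%:R] = dotZ h (fun i => (N ^ i)%:Z).
  rewrite horner_sum; apply: eq_bigr => i _.
  by rewrite hornerZ hornerXn -natrX natz.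
have ph_neq0 h : h \in s -> ph h != 0.
  move=> hs; apply: contra_notN (s_neq0 h hs) => /eqP ph0.
  apply/funext => i; have := congr1 (fun P : {poly int} => P`_i) ph0.
  rewrite coef0 coef_sum (bigD1 i) //= big1 => [|j ji].
    by rewrite coefZ coefXn eqxx mulr1 addr0.
  rewrite coefZ coefXn (_ : (i == j :> nat) = false) ?mulr0 //.
  by apply/negbTE; rewrite eq_sym.
have [|N] := @exists_nat_Nroot _ (\prod_(h <- s) ph h).
  by rewrite prodf_seq_neq0; apply/allP => h /ph_neq0.
rewrite /root horner_prod prodf_seq_neq0 => /allP NrootP.
by exists (fun i => (N ^ i)%:Z) => h /NrootP; rewrite phE.
Qed.

Lemma dotZR_approx (s : seq (zvec k)) (xi : rvec R k) (e : R) : 0 < e ->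
  exists N : nat, exists p : zvec k, (0 < N)%N /\
    forall h, h \in s -> `|dotZR h xi - dotZR h (fun i => N%:R^-1 * (p i)%:~R)| <= e.
Proof.
move=> e0; pose C := \big[Num.max/0]_(h <- s) \sum_(i < k) `|(h i)%:~R : R|.
pose N := (Num.truncn (C / e)).+1; have NR : 0 < N%:R :> R by rewrite ltr0n.
have CN : C <= e * N%:R.
  by have := truncnS_gt (C / e); rewrite ltr_pdivrMr // mulrC => /ltW.
exists N, (fun i => Num.floor (N%:R * xi i)); split => // h hs.
rewrite dotZRB; apply: le_trans (norm_dotZR_le h (c := N%:R^-1) _) _.
  by move=> i; apply: floor_approx.
rewrite ler_pdivrMr //; apply: le_trans CN.
exact: le_bigmax_seq.
Qed.

Lemma trig_eval0 a0 s (a : zvec k -> R) :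
  trig_eval a0 s a (fun _ => 0) = a0 + \sum_(h <- s) a h.
Proof.
by congr (_ + _); apply: eq_bigr => h _; rewrite dotZR0 mulr0 cos0 mulr1.
Qed.

Lemma trig_eval_frac a0 s (a : zvec k -> R) (p : zvec k) (q n : nat) :
  trig_eval a0 s a (fun i => (n%:R / q%:R) * (p i)%:~R) =
  a0 + \sum_(h <- s) a h * cos_frac q (dotZ h p) n.
Proof.
congr (_ + _); apply: eq_bigr => h _.
by rewrite dotZR_scale /cos_frac; congr (_ * cos _); ring.
Qed.

Section NonnegativeTrigPolynomial.
Variables (H : set (zvec k)) (a0 : R) (s : seq (zvec k)) (a : zvec k -> R).
Hypothesis TH : in_TH H a0 s a.

Lemma in_TH_const_term_ge (p : zvec k) (q L : nat) :
  (0 < L)%N -> (L <= q)%N ->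
  (forall h, h \in s -> forall j : int, L%:Z <= `|dotZ h p - j * q%:Z|) ->
  L%:R / q%:R <= a0.
Proof.
case: TH => _ [_ [T_ge0 T0]] L0 Lq gap; apply: const_term_ge_gap L0 Lq gap _ _.
  by move=> n; rewrite -trig_eval_frac.
by rewrite -trig_eval0.
Qed.

Lemma in_TH_const_term_ge0 : H `<=` [set h | h <> (fun _ => 0)] -> 0 <= a0.
Proof.
move=> H_neq0; have [p p_ok] : exists p : zvec k, forall h, h \in s -> dotZ h p != 0.
  by apply: exists_dotZ_neq0 => h hs; apply/H_neq0; case: TH => _ [sH _]; apply: sH.
pose q := (\max_(h <- s) `|dotZ h p|%N).+1.
have lt_q h : h \in s -> (`|dotZ h p| < q)%N.
  by move=> hs; rewrite /q ltnS; apply: leq_bigmax_seq.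
have gap h : h \in s -> forall j : int, 1 <= `|dotZ h p - j * q%:Z|.
  move=> hs j; have := p_ok h hs; have := lt_q h hs => m_lt m_neq0.
  have : j = 0 \/ 1 <= j \/ j <= -1 by lia.
  by case=> [->|[j_ge1|j_leN1]]; nia.
apply: le_trans _ (in_TH_const_term_ge (q := q) (L := 1) isT isT gap).
by rewrite divr_ge0 ?ler0n.
Qed.

Lemma in_TH_dist_frac_le (p : zvec k) (q : nat) : (0 < q)%N -> s != [::] ->
  0 <= a0 ->
  exists2 h, h \in s & dist_int (dotZR h (fun i => q%:R^-1 * (p i)%:~R)) <= a0.
Proof.
move=> q0 s_neq0 a0_ge0; have qR : 0 < q%:R :> R by rewrite ltr0n.
have [//|all_far] := pselect
  (exists2 h, h \in s & dist_int (dotZR h (fun i => q%:R^-1 * (p i)%:~R)) <= a0).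
pose L := (Num.truncn (a0 * q%:R)).+1.
have gap h : h \in s -> forall j : int, L%:Z <= `|dotZ h p - j * q%:Z|.
  move=> hs j; rewrite leNgt; apply/negP => lt_L; apply: all_far; exists h => //.
  rewrite dotZR_scale; apply: (dist_int_frac_le (j := j)) => //.
  apply: (@le_trans _ _ (Num.truncn (a0 * q%:R))%:R); last first.
    by rewrite truncn_le mulr_ge0 ?ler0n.
  by rewrite -abszE ler_nat; lia.
have [h0 h0s] : exists h0, h0 \in s.
  by exists (nth (fun _ => 0) s 0); rewrite mem_nth // lt0n size_eq0.
have := in_TH_const_term_ge (L := L) isT (ltnW (gap_lt_modulus q0 (gap h0 h0s))) gap.
by rewrite ler_pdivrMr // leNgt truncnS_gt.
Qed.

Lemma in_TH_dist_le (xi : rvec R k) (e : R) : 0 < e ->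
  H `<=` [set h | h <> (fun _ => 0)] -> H !=set0 ->
  exists2 h, H h & dist_int (dotZR h xi) <= a0 + e.
Proof.
move=> e0 H_neq0 [h0 Hh0]; have [_ [sH [_ T0]]] := TH.
have [s0|s_neq0] := eqVneq s [::].
  exists h0 => //; move: T0; rewrite trig_eval0 s0 big_nil addr0 => ->.
  by apply: le_trans (dist_int_le1 _) _; rewrite lerDl ltW.
have [N [p [N0 close]]] := dotZR_approx s xi e0.
have [h hs dist_le] := in_TH_dist_frac_le p N0 s_neq0 (in_TH_const_term_ge0 H_neq0).
exists h; first exact: sH.
apply: le_trans (dist_int_lipschitz _ (dotZR h (fun i => N%:R^-1 * (p i)%:~R))) _.
by rewrite lerD ?close.
Qed.

End NonnegativeTrigPolynomial.
End Lattice.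
End GammaDelta.

Theorem proposition3p1 (R : realType) (k : nat) (H : set (zvec k)) :
  (1 <= k)%N ->
  H `<=` [set h | h <> (fun _ => 0%R)] ->
  H !=set0 ->
  (@gamma R k H <= delta H)%E.
Proof.
(* [1 <= k] is redundant: Z^0 has no nonzero vector, so H would be empty. *)
move=> _ H_neq0 H_ne.
apply: ge_ereal_sup => _ [xi _ <-].
apply: le_ereal_inf_tmp => _ [a0 [s [a TH]] <-].
apply/lee_addgt0Pr => e e0.
have [h Hh dist_le] := in_TH_dist_le TH xi e0 H_neq0 H_ne.
apply: le_trans (ereal_inf_lbound _) _; first by exists h.
by rewrite -EFinD lee_fin.
Qed.
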